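(* Let $\chi:\mathcal H\to\mathcal H_L^\chi\otimes\mathcal H_R^\chi$ be a splitting map and $A\in\mathcal L(\mathcal H)$. Then $A$ is strictly $\chi$-local if and only if there exists a $\chi$-consistent $\tilde A\in\mathcal L(\mathcal H_L^\chi)$ such that $A=\chi^\dagger(\tilde A\otimes\mathbb 1)\chi$.
   Context: All Hilbert spaces are finite-dimensional and complex. A splitting map on $\mathcal H$ is an isometry $\chi:\mathcal H\to\mathcal H_L^\chi\otimes\mathcal H_R^\chi$; $\pi^\chi=\chi\chi^\dagger$. $\tilde A\in\mathcal L(\mathcal H_L^\chi)$ is $\chi$-consistent if $\pi^\chi(\tilde A\otimes\mathbb 1)=(\tilde A\otimes\mathbb 1)\pi^\chi$. $A\in\mathcal L(\mathcal H)$ is strictly $\chi$-local if there exists $\tilde A\in\mathcal L(\mathcal H_L^\chi)$ with $A\chi^\dagger=\chi^\dagger(\tilde A\otimes\mathbb 1)$ and $\chi A=(\tilde A\otimes\mathbb 1)\chi$. *)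

From HB Require Import structures.
From mathcomp Require Import all_boot all_order all_algebra.
From mathcomp Require Import complex mxtens.
From mathcomp Require Import reals.
Set Implicit Arguments. Unset Strict Implicit. Unset Printing Implicit Defensive.
Import Order.TTheory GRing.Theory Num.Theory.
Local Open Scope ring_scope.
Local Open Scope complex_scope.

(* Finite-dimensional complex Hilbert spaces are modelled as C^n with
   C = R[i], R : realType; operators are square matrices acting on column
   vectors; H_L (x) H_R = C^(p*q) via the Kronecker product tensmx (A *t B). *)

Definition adj {C : numClosedFieldType} {m n : nat} (A : 'M[C]_(m, n)) : 'M[C]_(n, m) :=
  (map_mx Num.conj A)^T.

Definition is_splitting_map {C : numClosedFieldType} {n p q : nat}
  (chi : 'M[C]_(p * q, n)) : Prop := adj chi *m chi = 1%:M.

Definition proj_chi {C : numClosedFieldType} {n p q : nat}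
  (chi : 'M[C]_(p * q, n)) : 'M[C]_(p * q) := chi *m adj chi.

Definition ampL {C : numClosedFieldType} {p : nat} (q : nat)
  (At : 'M[C]_p) : 'M[C]_(p * q) := At *t (1%:M : 'M[C]_q).

Definition chi_consistent {C : numClosedFieldType} {n p q : nat}
  (chi : 'M[C]_(p * q, n)) (At : 'M[C]_p) : Prop :=
  proj_chi chi *m ampL q At = ampL q At *m proj_chi chi.

Definition strictly_local {C : numClosedFieldType} {n p q : nat}
  (chi : 'M[C]_(p * q, n)) (A : 'M[C]_n) : Prop :=
  exists At : 'M[C]_p,
    A *m adj chi = adj chi *m ampL q At /\ chi *m A = ampL q At *m chi.

From HB Require Import structures.
From mathcomp Require Import all_boot all_order all_algebra.
From mathcomp Require Import complex mxtens.
From mathcomp Require Import reals.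
Local Open Scope ring_scope.

(* An operator B on the big space intertwined
   with A through V and W commutes with the idempotent V W, and A is then the
   compression W B V; conversely, if B commutes with V W, its compression
   W B V is intertwined with B. *)

Section Compression.

Variables (R : pzRingType) (m n : nat) (V : 'M[R]_(m, n)) (W : 'M[R]_(n, m)).
Hypothesis WV1 : W *m V = 1%:M.

Lemma compress_of_intertwined (A : 'M[R]_n) (B : 'M[R]_m) :
  V *m A = B *m V -> A = W *m B *m V.
Proof. by move=> VA; rewrite -mulmxA -VA mulmxA WV1 mul1mx. Qed.

Lemma proj_comm_of_intertwined (A : 'M[R]_n) (B : 'M[R]_m) :
  A *m W = W *m B -> V *m A = B *m V -> V *m W *m B = B *m (V *m W).
Proof. by move=> AW VA; rewrite -mulmxA -AW mulmxA VA -mulmxA. Qed.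

Lemma compress_intertwined_left (B : 'M[R]_m) :
  V *m W *m B = B *m (V *m W) -> W *m B *m V *m W = W *m B.
Proof. by move=> PB; rewrite -!mulmxA -PB !mulmxA WV1 mul1mx. Qed.

Lemma compress_intertwined_right (B : 'M[R]_m) :
  V *m W *m B = B *m (V *m W) -> V *m (W *m B *m V) = B *m V.
Proof. by move=> PB; rewrite !mulmxA PB -!mulmxA WV1 mulmx1. Qed.

End Compression.

Theorem mainTheorem5 (R : realType) (n p q : nat)
  (chi : 'M[R[i]]_(p * q, n)) (hchi : is_splitting_map chi)
  (A : 'M[R[i]]_n) :
  strictly_local chi A <->
  exists At : 'M[R[i]]_p,
    chi_consistent chi At /\ A = adj chi *m ampL q At *m chi.
Proof.
split.
- move=> [At [A_adj chi_A]]; exists At; split.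
  + exact: proj_comm_of_intertwined A_adj chi_A.
  + exact: compress_of_intertwined chi_A.
- move=> [At [consistent ->]]; exists At; split.
  + exact: compress_intertwined_left consistent.
  + exact: compress_intertwined_right consistent.
Qed.
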